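(* The Urysohn space $\mathbb U$ is almost-isometry unique: every metric space almost isometric to $\mathbb U$ is isometric to $\mathbb U$.
   Context: $\mathbb U$ denotes Urysohn's universal separable metric space: the unique (up to isometry) complete separable metric space such that for every finite metric space $F=\{x_0,\dots,x_n\}$, every isometry $\{x_0,\dots,x_{n-1}\}\to\mathbb U$ extends to an isometry $F\to\mathbb U$. For $\lambda>1$, an injection $f$ is $\lambda$-bi-Lipschitz if for all distinct $a,b$ in its domain $d(f(a),f(b))<\lambda d(a,b)$ and $d(a,b)<\lambda d(f(a),f(b))$. Two metric spaces $X,Y$ are almost isometric if for every $\lambda>1$ there is a $\lambda$-bi-Lipschitz bijection from $X$ onto $Y$. *)

From Stdlib Require Import Reals List.
Open Scope R_scope.

Definition is_metric {T : Type} (d : T -> T -> R) : Prop :=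
  (forall x y, d x y = 0 <-> x = y) /\
  (forall x y, d x y = d y x) /\
  (forall x y z, d x z <= d x y + d y z).

Definition cauchy_seq {T : Type} (d : T -> T -> R) (u : nat -> T) : Prop :=
  forall eps, 0 < eps -> exists N, forall m n, (N <= m)%nat -> (N <= n)%nat ->
    d (u m) (u n) < eps.

Definition converges_to {T : Type} (d : T -> T -> R) (u : nat -> T) (l : T) : Prop :=
  forall eps, 0 < eps -> exists N, forall n, (N <= n)%nat -> d (u n) l < eps.

Definition complete_metric {T : Type} (d : T -> T -> R) : Prop :=
  forall u : nat -> T, cauchy_seq d u -> exists l, converges_to d u l.

(* separable: there is a countable dense subset (enumerated by a sequence;
   the space is nonempty in our use). *)
Definition separable_metric {T : Type} (d : T -> T -> R) : Prop :=
  exists s : nat -> T, forall x eps, 0 < eps -> exists n, d x (s n) < eps.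

(* Urysohn finite extension property: for every finite metric space F and
   point x0 of F, every isometry F \ {x0} -> U extends to an isometry F -> U.
   (Values of f at x0 are irrelevant.) *)
Definition finite_extension_property {U : Type} (dU : U -> U -> R) : Prop :=
  forall (F : Type) (dF : F -> F -> R),
    is_metric dF -> (exists l : list F, forall x, In x l) ->
    forall (x0 : F) (f : F -> U),
      (forall x y, x <> x0 -> y <> x0 -> dU (f x) (f y) = dF x y) ->
      exists g : F -> U,
        (forall x, x <> x0 -> g x = f x) /\
        (forall x y, dU (g x) (g y) = dF x y).

Definition urysohn_space {U : Type} (dU : U -> U -> R) : Prop :=
  is_metric dU /\ complete_metric dU /\ separable_metric dU /\
  finite_extension_property dU.

Definition bijective_map {X Y : Type} (f : X -> Y) : Prop :=
  (forall a b, f a = f b -> a = b) /\ (forall y, exists x, f x = y).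

Definition bilipschitz_bij {X Y : Type} (dX : X -> X -> R) (dY : Y -> Y -> R)
  (lam : R) (f : X -> Y) : Prop :=
  bijective_map f /\
  forall a b, a <> b ->
    dY (f a) (f b) < lam * dX a b /\ dX a b < lam * dY (f a) (f b).

Definition almost_isometric {X Y : Type} (dX : X -> X -> R) (dY : Y -> Y -> R) : Prop :=
  forall lam, 1 < lam -> exists f : X -> Y, bilipschitz_bij dX dY lam f.

Definition isometric {X Y : Type} (dX : X -> X -> R) (dY : Y -> Y -> R) : Prop :=
  exists f : X -> Y, bijective_map f /\ forall a b, dY (f a) (f b) = dX a b.

From Stdlib Require Import Reals Lra Lia Psatz List Classical ClassicalEpsilon ProofIrrelevance.
Open Scope R_scope.

(* The one-point extension property (every Katetov function on finitely many
   points is realised by a point) characterises the Urysohn space among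
   complete separable spaces.  If X is almost isometric to U, pulling a
   Katetov function back through a lam-bi-Lipschitz bijection realises it in X
   up to an error that vanishes as lam -> 1; X inherits completeness from U, so
   a Cauchy sequence of successive refinements realises it exactly.  A
   back-and-forth construction then yields isometric sequences dense in X and
   in U, and the isometry between them extends to the completions. *)

Lemma Rabs_le_bounds a b : Rabs a <= b -> - b <= a <= b.
Proof. unfold Rabs; destruct (Rcase_abs a); intros; lra. Qed.

Section MetricFacts.
Context {T : Type} (d : T -> T -> R) (Hd : is_metric d).

Lemma dist_refl x : d x x = 0.
Proof. apply (proj1 Hd); reflexivity. Qed.

Lemma dist_sym x y : d x y = d y x.
Proof. apply (proj1 (proj2 Hd)). Qed.

Lemma dist_triangle x y z : d x z <= d x y + d y z.
Proof. apply (proj2 (proj2 Hd)). Qed.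

Lemma dist_eq x y : d x y = 0 -> x = y.
Proof. apply (proj1 Hd). Qed.

Lemma dist_nonneg x y : 0 <= d x y.
Proof. pose proof (dist_triangle x y x). rewrite dist_refl, (dist_sym y x) in H. lra. Qed.

Lemma dist_reverse_triangle x y z : Rabs (d x z - d y z) <= d x y.
Proof.
  apply Rabs_le. pose proof (dist_triangle x y z). pose proof (dist_triangle y x z).
  rewrite (dist_sym y x) in H0. lra.
Qed.

Lemma dist_quadrilateral x x' u u' : Rabs (d x x' - d u u') <= d x u + d x' u'.
Proof.
  apply Rabs_le.
  pose proof (dist_triangle x u x'). pose proof (dist_triangle u u' x').
  pose proof (dist_triangle u x u'). pose proof (dist_triangle x x' u').
  pose proof (dist_sym u x). pose proof (dist_sym u' x'). lra.
Qed.

End MetricFacts.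

(* [g i] is read as the distance from a prospective new point to [p i], i < n. *)
Definition katetov {T : Type} (d : T -> T -> R) (p : nat -> T) (g : nat -> R) (n : nat) :=
  forall i j, (i < n)%nat -> (j < n)%nat -> g i - g j <= d (p i) (p j) <= g i + g j.

Definition one_point_extension {T : Type} (d : T -> T -> R) : Prop :=
  forall n p g, katetov d p g n -> exists z, forall i, (i < n)%nat -> d z (p i) = g i.

Definition approx_one_point_extension {T : Type} (d : T -> T -> R) : Prop :=
  forall n p g eps, katetov d p g n -> 0 < eps ->
    exists z, forall i, (i < n)%nat -> Rabs (d z (p i) - g i) <= eps.

Section KatetovFunctions.
Context {T : Type} (d : T -> T -> R) (Hd : is_metric d).
Context (n : nat) (p : nat -> T) (g : nat -> R).

Lemma katetov_nonneg : katetov d p g n -> forall i, (i < n)%nat -> 0 <= g i.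
Proof. intros Hg i Hi. destruct (Hg i i Hi Hi) as [_ H]. rewrite (dist_refl d Hd) in H. lra. Qed.

Lemma katetov_eq : katetov d p g n ->
  forall i j, (i < n)%nat -> (j < n)%nat -> p i = p j -> g i = g j.
Proof.
  intros Hg i j Hi Hj E. destruct (Hg i j Hi Hj) as [H1 _]. destruct (Hg j i Hj Hi) as [H2 _].
  rewrite E, (dist_refl d Hd) in H1, H2. lra.
Qed.

Lemma katetov_dist x : katetov d p (fun i => d x (p i)) n.
Proof.
  intros i j _ _. split.
  - pose proof (dist_reverse_triangle d Hd (p i) (p j) x) as H. apply Rabs_le_bounds in H.
    rewrite (dist_sym d Hd (p i) x), (dist_sym d Hd (p j) x) in H. lra.
  - pose proof (dist_triangle d Hd (p i) x (p j)). rewrite (dist_sym d Hd (p i) x) in H. lra.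
Qed.

Lemma katetov_error_le : katetov d p g n -> forall z i j, (i < n)%nat -> (j < n)%nat ->
  Rabs (d z (p i) - g i) <= g j + d z (p j).
Proof.
  intros Hg z i j Hi Hj. destruct (Hg i j Hi Hj) as [H1 H2]. apply Rabs_le.
  pose proof (dist_triangle d Hd z (p j) (p i)). pose proof (dist_triangle d Hd (p i) z (p j)).
  rewrite (dist_sym d Hd (p j) (p i)) in H. rewrite (dist_sym d Hd (p i) z) in H0. lra.
Qed.

Lemma katetov_snoc z M : katetov d p g n -> 0 <= M ->
  (forall i, (i < n)%nat -> Rabs (d z (p i) - g i) <= M <= g i + d z (p i)) ->
  katetov d (fun i => if Nat.ltb i n then p i else z) (fun i => if Nat.ltb i n then g i else M) (S n).
Proof.
  intros Hg HM Hz i j Hi Hj.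
  destruct (Nat.ltb_spec i n) as [Ei|Ei]; destruct (Nat.ltb_spec j n) as [Ej|Ej].
  - apply Hg; auto.
  - destruct (Hz i Ei) as [H1 H2]. apply Rabs_le_bounds in H1. rewrite (dist_sym d Hd). lra.
  - destruct (Hz j Ej) as [H1 H2]. apply Rabs_le_bounds in H1. lra.
  - rewrite (dist_refl d Hd). lra.
Qed.

End KatetovFunctions.

Lemma finite_sup (f : nat -> R) (n : nat) :
  exists M, 0 <= M /\ (forall i, (i < n)%nat -> f i <= M) /\
    forall B, 0 <= B -> (forall i, (i < n)%nat -> f i <= B) -> M <= B.
Proof.
  induction n as [|n [M [HM0 [HMub HMlub]]]].
  - exists 0. repeat split; intros; [lra|lia|lra].
  - exists (Rmax M (f n)). repeat split.
    + apply Rle_trans with M; [lra|apply Rmax_l].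
    + intros i Hi. destruct (Nat.eq_dec i n) as [->|Hne]; [apply Rmax_r|].
      apply Rle_trans with M; [apply HMub; lia|apply Rmax_l].
    + intros B HB Hf. apply Rmax_lub; [apply HMlub; auto|apply Hf; lia].
Qed.

Lemma finite_subtype {A : Type} (L : list A) (P : A -> Prop) :
  (forall u, P u -> In u L) -> exists l : list (sig P), forall x, In x l.
Proof.
  revert P; induction L as [|a L IH]; intros P HP.
  - exists nil. intros [u pu]. destruct (HP u pu).
  - set (P' := fun u => P u /\ u <> a).
    destruct (IH P') as [l' Hl'].
    { intros u [pu nu]. destruct (HP u pu) as [E|E]; [congruence|exact E]. }
    set (forget := fun x : sig P' => exist P (proj1_sig x) (proj1 (proj2_sig x))).
    assert (Hforget : forall u (pu : P u), u <> a -> In (exist P u pu) (map forget l')).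
    { intros u pu E. apply in_map_iff. exists (exist P' u (conj pu E)).
      split; [unfold forget; simpl; f_equal; apply proof_irrelevance|apply Hl']. }
    destruct (classic (P a)) as [pa|npa].
    + exists (exist P a pa :: map forget l'). intros [u pu].
      destruct (classic (u = a)) as [->|E]; [left; f_equal; apply proof_irrelevance|right; auto].
    + exists (map forget l'). intros [u pu]. apply Hforget. intros ->. contradiction.
Qed.

(* The finite metric space [F] of the extension property: the points [p i]
   together with a new point [None] at distance [g i] from [p i]. *)
Section OnePointSpace.
Context {U : Type} (dU : U -> U -> R) (HU : is_metric dU).
Context (n : nat) (p : nat -> U) (g : nat -> R).
Hypothesis Hg : katetov dU p g n.
Hypothesis Hpos : forall i, (i < n)%nat -> 0 < g i.

Definition family_point (u : U) : Prop := exists i, (i < n)%nat /\ p i = u.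

Definition family_value (u : U) : R :=
  epsilon (inhabits 0) (fun r => exists i, (i < n)%nat /\ p i = u /\ g i = r).

Lemma family_value_spec i : (i < n)%nat -> family_value (p i) = g i.
Proof.
  intros Hi. unfold family_value.
  destruct (epsilon_spec (inhabits 0) (fun r => exists j, (j < n)%nat /\ p j = p i /\ g j = r))
    as [j [Hj [E1 E2]]].
  { exists (g i), i. auto. }
  rewrite <- E2. apply (katetov_eq dU HU n p g); auto.
Qed.

Lemma family_point_index (a : sig family_point) :
  exists i, (i < n)%nat /\ proj1_sig a = p i /\ family_value (proj1_sig a) = g i.
Proof. destruct a as [u [i [Hi <-]]]. exists i. simpl. auto using family_value_spec. Qed.

Definition one_point_dist (x y : option (sig family_point)) : R :=
  match x, y with
  | Some a, Some b => dU (proj1_sig a) (proj1_sig b)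
  | None, Some b => family_value (proj1_sig b)
  | Some a, None => family_value (proj1_sig a)
  | None, None => 0
  end.

Lemma one_point_dist_metric : is_metric one_point_dist.
Proof.
  split; [|split].
  - intros [a|] [b|]; simpl; split; intro H; try reflexivity; try discriminate.
    + apply (dist_eq dU HU) in H. destruct a as [u pu], b as [v pv]. simpl in H. subst.
      do 2 f_equal. apply proof_irrelevance.
    + inversion H. apply (dist_refl dU HU).
    + destruct (family_point_index a) as [i [Hi [_ E]]]. pose proof (Hpos i Hi). lra.
    + destruct (family_point_index b) as [i [Hi [_ E]]]. pose proof (Hpos i Hi). lra.
  - intros [a|] [b|]; simpl; auto. apply (dist_sym dU HU).
  - intros [a|] [b|] [c|]; simpl;
      try (destruct (family_point_index a) as [i [Hi [-> ->]]]);
      try (destruct (family_point_index b) as [j [Hj [-> ->]]]);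
      try (destruct (family_point_index c) as [k [Hk [-> ->]]]).
    + apply (dist_triangle dU HU).
    + destruct (Hg i j Hi Hj). lra.
    + destruct (Hg i k Hi Hk). lra.
    + pose proof (Hpos i Hi). lra.
    + destruct (Hg k j Hk Hj) as [H _]. rewrite (dist_sym dU HU) in H. lra.
    + pose proof (Hpos j Hj). lra.
    + lra.
    + lra.
Qed.

Lemma one_point_space_finite : exists l : list (option (sig family_point)), forall x, In x l.
Proof.
  destruct (finite_subtype (map p (seq 0 n)) family_point) as [l Hl].
  { intros u [i [Hi <-]]. apply in_map, in_seq. lia. }
  exists (None :: map Some l). intros [a|]; [right; apply in_map, Hl|left; reflexivity].
Qed.

Lemma positive_katetov_realized (u0 : U) : finite_extension_property dU ->
  exists z, forall i, (i < n)%nat -> dU z (p i) = g i.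
Proof.
  intros HF.
  set (f := fun x : option (sig family_point) => match x with Some a => proj1_sig a | None => u0 end).
  destruct (HF _ one_point_dist one_point_dist_metric one_point_space_finite None f)
    as [h [Hh_ext Hh_iso]].
  { intros [a|] [b|] Ha Hb; try congruence. reflexivity. }
  exists (h None). intros i Hi.
  set (a := exist family_point (p i) (ex_intro _ i (conj Hi eq_refl))).
  pose proof (Hh_iso None (Some a)) as H. rewrite (Hh_ext (Some a)) in H by discriminate.
  simpl in H. rewrite H. apply family_value_spec; auto.
Qed.

End OnePointSpace.

Lemma urysohn_one_point_extension {U : Type} (dU : U -> U -> R) (u0 : U) :
  is_metric dU -> finite_extension_property dU -> one_point_extension dU.
Proof.
  intros HU HF n p g Hg.
  destruct (classic (exists i, (i < n)%nat /\ g i = 0)) as [[i [Hi Hgi]]|Hno].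
  - exists (p i). intros j Hj.
    destruct (Hg i j Hi Hj) as [_ H1]. destruct (Hg j i Hj Hi) as [H2 _].
    rewrite (dist_sym dU HU (p j)) in H2. lra.
  - apply (positive_katetov_realized dU HU n p g Hg); auto.
    intros i Hi. destruct (Rle_lt_or_eq_dec _ _ (katetov_nonneg dU HU n p g Hg i Hi)); auto.
    exfalso. apply Hno. eauto.
Qed.

Definition bilipschitz_le {X Y : Type} (dX : X -> X -> R) (dY : Y -> Y -> R)
  (lam : R) (f : X -> Y) : Prop :=
  forall a b, dY (f a) (f b) <= lam * dX a b /\ dX a b <= lam * dY (f a) (f b).

Lemma bilipschitz_bij_le {X Y : Type} (dX : X -> X -> R) (dY : Y -> Y -> R) lam f :
  is_metric dX -> is_metric dY -> 0 < lam -> bilipschitz_bij dX dY lam f ->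
  bilipschitz_le dX dY lam f.
Proof.
  intros HX HY Hlam [_ Hf] a b. destruct (classic (a = b)) as [->|E].
  - rewrite (dist_refl dX HX), (dist_refl dY HY). lra.
  - destruct (Hf a b E). lra.
Qed.

Section BilipschitzTransfer.
Context {X Y : Type} (dX : X -> X -> R) (dY : Y -> Y -> R).
Context (HX : is_metric dX) (HY : is_metric dY).
Context (lam : R) (phi : X -> Y) (Hphi : bilipschitz_le dX dY lam phi).
Hypothesis phi_surj : forall y, exists x, phi x = y.

Lemma complete_of_bilipschitz : 0 < lam -> complete_metric dY -> complete_metric dX.
Proof.
  intros Hlam HcY v Hv. destruct (HcY (fun m => phi (v m))) as [l Hl].
  - intros eps Heps. destruct (Hv (eps / lam)) as [N HN]; [apply Rdiv_lt_0_compat; lra|].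
    exists N. intros m m' Hm Hm'. specialize (HN m m' Hm Hm').
    pose proof (proj1 (Hphi (v m) (v m'))). apply Rlt_le_trans with (lam * (eps / lam)); [|field_simplify; lra].
    apply Rle_lt_trans with (lam * dX (v m) (v m')); [lra|]. apply Rmult_lt_compat_l; lra.
  - destruct (phi_surj l) as [x <-]. exists x. intros eps Heps.
    destruct (Hl (eps / lam)) as [N HN]; [apply Rdiv_lt_0_compat; lra|].
    exists N. intros m Hm. specialize (HN m Hm). pose proof (proj2 (Hphi (v m) x)).
    apply Rle_lt_trans with (lam * dY (phi (v m)) (phi x)); [lra|].
    apply Rlt_le_trans with (lam * (eps / lam)); [apply Rmult_lt_compat_l; lra|field_simplify; lra].
Qed.

Lemma separable_of_bilipschitz : 0 < lam -> separable_metric dY -> separable_metric dX.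
Proof.
  intros Hlam [s Hs].
  destruct (phi_surj (s 0%nat)) as [x0 _].
  set (sX := fun n => epsilon (inhabits x0) (fun x => phi x = s n)).
  assert (HsX : forall n, phi (sX n) = s n)
    by (intro n; apply (epsilon_spec (inhabits x0) (fun x => phi x = s n)), phi_surj).
  exists sX. intros x eps Heps. destruct (Hs (phi x) (eps / lam)) as [n Hn]; [apply Rdiv_lt_0_compat; lra|].
  exists n. pose proof (proj2 (Hphi x (sX n))). rewrite HsX in H.
  apply Rle_lt_trans with (lam * dY (phi x) (s n)); [lra|].
  apply Rlt_le_trans with (lam * (eps / lam)); [apply Rmult_lt_compat_l; lra|field_simplify; lra].
Qed.

(* The new point is sought in [Y] at the inflated distances
   [g i / lam + (lam - 1/lam) G], which form a Katetov function on [phi o p]. *)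
Lemma bilipschitz_near_extension : 1 <= lam -> one_point_extension dY ->
  forall n p g G, katetov dX p g n -> (forall i, (i < n)%nat -> g i <= G) ->
  exists z, forall i, (i < n)%nat -> g i <= dX z (p i) <= g i + (lam * lam - 1) * G.
Proof.
  intros Hlam EY n p g G Hg HG.
  set (mu := / lam).
  assert (Hlm : lam * mu = 1) by (unfold mu; field; lra).
  assert (Hmu0 : 0 < mu) by (apply Rinv_0_lt_compat; lra).
  assert (Hmu1 : mu <= 1) by nra.
  pose proof (katetov_nonneg dX HX n p g Hg) as Hg0.
  set (h := fun i => mu * g i + (lam - mu) * G).
  assert (Hh : katetov dY (fun i => phi (p i)) h n).
  { intros i j Hi Hj. unfold h.
    destruct (Hg i j Hi Hj) as [K1 K2]. destruct (Hphi (p i) (p j)) as [B1 B2].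
    pose proof (Hg0 i Hi). pose proof (Hg0 j Hj). pose proof (HG i Hi). pose proof (HG j Hj).
    split; nra. }
  destruct (EY n _ h Hh) as [w Hw]. destruct (phi_surj w) as [z <-].
  exists z. intros i Hi. specialize (Hw i Hi). unfold h in Hw.
  destruct (Hphi z (p i)) as [B1 B2]. rewrite Hw in B1, B2.
  pose proof (Hg0 i Hi). pose proof (HG i Hi).
  split; nra.
Qed.

End BilipschitzTransfer.

Lemma almost_isometric_approx_extension {X Y : Type} (dX : X -> X -> R) (dY : Y -> Y -> R) :
  is_metric dX -> is_metric dY -> one_point_extension dY -> almost_isometric dX dY ->
  approx_one_point_extension dX.
Proof.
  intros HX HY EY HA n p g eps Hg Heps.
  destruct (finite_sup g n) as [G [HG0 [HG _]]].
  set (t := eps / (G + 1)).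
  assert (Ht : 0 < t) by (apply Rdiv_lt_0_compat; lra).
  assert (HtG : t * G <= eps).
  { unfold t. apply Rmult_le_reg_r with (G + 1); [lra|].
    replace (eps / (G + 1) * G * (G + 1)) with (eps * G) by (field; lra). nra. }
  set (lam := sqrt (1 + t)).
  assert (Hl2 : lam * lam = 1 + t) by (apply sqrt_sqrt; lra).
  assert (Hl1 : 1 < lam) by (unfold lam; rewrite <- sqrt_1 at 1; apply sqrt_lt_1; lra).
  destruct (HA lam Hl1) as [phi Hphi].
  destruct (bilipschitz_near_extension dX dY HX lam phi
              (bilipschitz_bij_le dX dY lam phi HX HY ltac:(lra) Hphi)
              (proj2 (proj1 Hphi)) ltac:(lra) EY n p g G Hg HG) as [z Hz].
  exists z. intros i Hi. specialize (Hz i Hi). rewrite Hl2 in Hz. apply Rabs_le. lra.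
Qed.

Lemma dependent_choice {A : Type} (P : nat -> A -> Prop) (Rel : nat -> A -> A -> Prop) :
  (exists a, P 0%nat a) -> (forall k a, P k a -> exists b, P (S k) b /\ Rel k a b) ->
  exists u : nat -> A, forall k, P k (u k) /\ Rel k (u k) (u (S k)).
Proof.
  intros [a0 Ha0] Hstep.
  set (next := fun k a => epsilon (inhabits a0) (fun b => P (S k) b /\ Rel k a b)).
  assert (Hnext : forall k a, P k a -> P (S k) (next k a) /\ Rel k a (next k a))
    by (intros k a Ha; apply (epsilon_spec (inhabits a0) (fun b => P (S k) b /\ Rel k a b)), Hstep, Ha).
  set (u := fix u (k : nat) : A := match k with O => a0 | S k => next k (u k) end).
  assert (HP : forall k, P k (u k)) by (induction k; simpl; [exact Ha0|apply Hnext, IHk]).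
  exists u. intros k. split; [apply HP|apply (Hnext k (u k) (HP k))].
Qed.

Lemma pow_half_small eps : 0 < eps -> exists N, forall m, (N <= m)%nat -> (/ 2) ^ m < eps.
Proof.
  intros Heps. destruct (pow_lt_1_zero (/ 2) ltac:(rewrite Rabs_pos_eq; lra) eps Heps) as [N HN].
  exists N. intros m Hm. specialize (HN m Hm). rewrite Rabs_pos_eq in HN; [exact HN|].
  apply pow_le; lra.
Qed.

Lemma eq_of_abs_le_all a : (forall eta, 0 < eta -> Rabs a <= eta) -> a = 0.
Proof.
  intros H. destruct (Req_dec a 0) as [|Hn]; auto. exfalso.
  pose proof (Rabs_pos_lt a Hn). specialize (H (Rabs a / 2) ltac:(lra)). lra.
Qed.

Section CompleteSpaces.
Context {T : Type} (d : T -> T -> R) (Hd : is_metric d).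

Lemma geometric_dist_bound (u : nat -> T) (C : R) :
  (forall k, d (u k) (u (S k)) <= C * (/ 2) ^ k) ->
  forall k m, (k <= m)%nat -> d (u k) (u m) <= 2 * C * (/ 2) ^ k.
Proof.
  intros Hu k m Hkm.
  assert (HC : 0 <= C) by (specialize (Hu 0%nat); pose proof (dist_nonneg d Hd (u 0%nat) (u 1%nat)); simpl in Hu; lra).
  assert (Hsum : forall j, d (u k) (u (k + j)%nat) <= 2 * C * ((/ 2) ^ k - (/ 2) ^ (k + j))).
  { induction j as [|j IH].
    - rewrite Nat.add_0_r, (dist_refl d Hd). lra.
    - rewrite Nat.add_succ_r. simpl (_ ^ S _).
      pose proof (dist_triangle d Hd (u k) (u (k + j)%nat) (u (S (k + j)))).
      specialize (Hu (k + j)%nat). lra. }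
  replace m with (k + (m - k))%nat by lia.
  pose proof (Hsum (m - k)%nat). pose proof (pow_le (/ 2) (k + (m - k)) ltac:(lra)). nra.
Qed.

Lemma geometric_cauchy (u : nat -> T) (C : R) :
  (forall k, d (u k) (u (S k)) <= C * (/ 2) ^ k) -> cauchy_seq d u.
Proof.
  intros Hu eps Heps.
  assert (HC : 0 <= C) by (specialize (Hu 0%nat); pose proof (dist_nonneg d Hd (u 0%nat) (u 1%nat)); simpl in Hu; lra).
  destruct (pow_half_small (eps / (4 * C + 1))) as [N HN]; [apply Rdiv_lt_0_compat; lra|].
  exists N. intros m m' Hm Hm'.
  pose proof (geometric_dist_bound u C Hu N m Hm). pose proof (geometric_dist_bound u C Hu N m' Hm').
  pose proof (dist_triangle d Hd (u m) (u N) (u m')). rewrite (dist_sym d Hd (u m) (u N)) in H1.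
  specialize (HN N (le_n N)).
  assert ((4 * C + 1) * (/ 2) ^ N < eps).
  { apply Rmult_lt_compat_l with (r := 4 * C + 1) in HN; [|lra].
    replace ((4 * C + 1) * (eps / (4 * C + 1))) with eps in HN by (field; lra). exact HN. }
  pose proof (pow_le (/ 2) N ltac:(lra)). nra.
Qed.

(* Adjoin [z] to the family, at distance the worst current error, and ask
   for an [eps]-approximation of the enlarged family. *)
Lemma approx_extension_refine : approx_one_point_extension d ->
  forall n p g, katetov d p g n ->
  forall z delta, 0 <= delta -> (forall i, (i < n)%nat -> Rabs (d z (p i) - g i) <= delta) ->
  forall eps, 0 < eps ->
  exists z', (forall i, (i < n)%nat -> Rabs (d z' (p i) - g i) <= eps) /\ d z z' <= delta + eps.
Proof.
  intros Happrox n p g Hg z delta Hdelta Hz eps Heps.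
  destruct (finite_sup (fun i => Rabs (d z (p i) - g i)) n) as [M [HM0 [HMub HMlub]]].
  assert (HMdelta : M <= delta) by (apply HMlub; auto).
  assert (Hg' : katetov d (fun i => if Nat.ltb i n then p i else z)
                  (fun i => if Nat.ltb i n then g i else M) (S n)).
  { apply (katetov_snoc d Hd); auto. intros i Hi. split; [apply HMub; auto|].
    apply HMlub.
    - pose proof (katetov_nonneg d Hd n p g Hg i Hi). pose proof (dist_nonneg d Hd z (p i)). lra.
    - intros j Hj. apply (katetov_error_le d Hd n p g Hg z j i Hj Hi). }
  destruct (Happrox (S n) _ _ eps Hg' Heps) as [z' Hz'].
  exists z'. split.
  - intros i Hi. specialize (Hz' i ltac:(lia)). simpl in Hz'.
    destruct (Nat.ltb_spec i n); [exact Hz'|lia].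
  - specialize (Hz' n ltac:(lia)). rewrite Nat.ltb_irrefl in Hz'.
    apply Rabs_le_bounds in Hz'. rewrite (dist_sym d Hd). lra.
Qed.

Lemma complete_approx_extension : complete_metric d -> approx_one_point_extension d ->
  one_point_extension d.
Proof.
  intros Hc Happrox n p g Hg.
  destruct (dependent_choice
              (fun k z => forall i, (i < n)%nat -> Rabs (d z (p i) - g i) <= (/ 2) ^ k)
              (fun k z z' => d z z' <= 2 * (/ 2) ^ k)) as [u Hu].
  - apply Happrox; simpl; auto; lra.
  - intros k z Hz.
    destruct (approx_extension_refine Happrox n p g Hg z ((/ 2) ^ k) (pow_le (/ 2) k ltac:(lra)) Hz
                ((/ 2) ^ S k) (pow_lt (/ 2) (S k) ltac:(lra))) as [z' [Hz' Hzz']].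
    exists z'. split; [exact Hz'|]. simpl in Hzz'. pose proof (pow_le (/ 2) k ltac:(lra)). lra.
  - destruct (Hc u) as [l Hl].
    { apply (geometric_cauchy u 2). intro k. apply (proj2 (Hu k)). }
    exists l. intros i Hi. apply Rminus_diag_uniq, eq_of_abs_le_all. intros eta Heta.
    destruct (Hl (eta / 2) ltac:(lra)) as [N1 HN1].
    destruct (pow_half_small (eta / 2) ltac:(lra)) as [N2 HN2].
    set (m := Nat.max N1 N2).
    specialize (HN1 m ltac:(lia)). specialize (HN2 m ltac:(lia)).
    pose proof (proj1 (Hu m) i Hi) as Hm.
    pose proof (dist_reverse_triangle d Hd l (u m) (p i)). rewrite (dist_sym d Hd l (u m)) in H.
    replace (d l (p i) - g i) with ((d l (p i) - d (u m) (p i)) + (d (u m) (p i) - g i)) by ring.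
    eapply Rle_trans; [apply Rabs_triang|]. lra.
Qed.

End CompleteSpaces.

Definition update {A : Type} (f : nat -> A) (m : nat) (x : A) : nat -> A :=
  fun i => if Nat.eqb i m then x else f i.

Lemma update_at {A : Type} (f : nat -> A) m x : update f m x m = x.
Proof. unfold update. rewrite Nat.eqb_refl. reflexivity. Qed.

Lemma update_other {A : Type} (f : nat -> A) m x i : i <> m -> update f m x i = f i.
Proof. intros Hi. unfold update. apply Nat.eqb_neq in Hi. rewrite Hi. reflexivity. Qed.

Lemma update_enumerates {A : Type} (f : nat -> A) (s : nat -> A) (index : nat -> nat) m x :
  (forall k, (index k < m)%nat -> f (index k) = s k) -> (forall k, index k = m -> x = s k) ->
  forall k, (index k < S m)%nat -> update f m x (index k) = s k.
Proof.
  intros Hf Hx k Hk. destruct (Nat.eq_dec (index k) m) as [E|E].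
  - rewrite E, update_at. auto.
  - rewrite update_other by exact E. apply Hf. lia.
Qed.

Lemma stabilizing_coordinates {A : Type} (v : nat -> nat -> A) :
  (forall k i, (i < k)%nat -> v (S k) i = v k i) ->
  forall i m, (i < m)%nat -> v m i = v (S i) i.
Proof.
  intros Hv i m Him. induction m as [|m IH]; [lia|].
  destruct (Nat.eq_dec i m) as [->|E]; [reflexivity|].
  rewrite Hv by lia. apply IH. lia.
Qed.

Definition partial_isometry {X Y : Type} (dX : X -> X -> R) (dY : Y -> Y -> R)
  (a : nat -> X) (b : nat -> Y) (m : nat) : Prop :=
  forall i j, (i < m)%nat -> (j < m)%nat -> dY (b i) (b j) = dX (a i) (a j).

Lemma partial_isometry_sym {X Y : Type} dX dY (a : nat -> X) (b : nat -> Y) m :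
  partial_isometry dX dY a b m -> partial_isometry dY dX b a m.
Proof. intros H i j Hi Hj. symmetry. auto. Qed.

Lemma katetov_transport {X Y : Type} dX dY (a : nat -> X) (b : nat -> Y) g n :
  partial_isometry dX dY a b n -> katetov dX a g n -> katetov dY b g n.
Proof. intros Hab Hg i j Hi Hj. rewrite Hab by auto. auto. Qed.

Section BackAndForth.
Context {X Y : Type} (dX : X -> X -> R) (dY : Y -> Y -> R).
Context (HX : is_metric dX) (HY : is_metric dY).

Lemma partial_isometry_extend_point : one_point_extension dY ->
  forall a b m, partial_isometry dX dY a b m ->
  forall x, exists y, partial_isometry dX dY (update a m x) (update b m y) (S m).
Proof.
  intros EY a b m Hab x.
  destruct (EY m b (fun i => dX x (a i))) as [y Hy].
  { apply (katetov_transport dX dY a); auto. apply (katetov_dist dX HX). }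
  exists y. intros i j Hi Hj.
  destruct (Nat.eq_dec i m) as [->|Ei]; destruct (Nat.eq_dec j m) as [->|Ej];
    rewrite ?update_at, ?update_other by assumption.
  - rewrite (dist_refl dX HX), (dist_refl dY HY). reflexivity.
  - apply Hy. lia.
  - rewrite (dist_sym dX HX), (dist_sym dY HY). apply Hy. lia.
  - apply Hab; lia.
Qed.

End BackAndForth.

Lemma back_and_forth {X Y : Type} (dX : X -> X -> R) (dY : Y -> Y -> R)
  (sX : nat -> X) (sY : nat -> Y) :
  is_metric dX -> is_metric dY -> one_point_extension dX -> one_point_extension dY ->
  exists (a : nat -> X) (b : nat -> Y), (forall i j, dY (b i) (b j) = dX (a i) (a j)) /\
    (forall k, a (2 * k)%nat = sX k) /\ (forall k, b (2 * k + 1)%nat = sY k).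
Proof.
  intros HX HY EX EY.
  destruct (dependent_choice
    (fun m (s : (nat -> X) * (nat -> Y)) => partial_isometry dX dY (fst s) (snd s) m /\
       (forall k, (2 * k < m)%nat -> fst s (2 * k)%nat = sX k) /\
       (forall k, (2 * k + 1 < m)%nat -> snd s (2 * k + 1)%nat = sY k))
    (fun m s s' => forall i, (i < m)%nat -> fst s' i = fst s i /\ snd s' i = snd s i))
    as [u Hu].
  - exists (sX, sY). repeat split; intros i; simpl; lia.
  - intros m [a b] [Hab [Ha Hb]]. simpl in *.
    assert (Hkeep : forall x y i, (i < m)%nat -> update a m x i = a i /\ update b m y i = b i)
      by (intros x y i Hi; rewrite !update_other by lia; auto).
    destruct (Nat.Even_or_Odd m) as [[k Hk]|[k Hk]].
    + destruct (partial_isometry_extend_point dX dY HX HY EY a b m Hab (sX k)) as [y Hy].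
      exists (update a m (sX k), update b m y). simpl. repeat split; auto.
      * apply (update_enumerates a sX (fun k => 2 * k)%nat); auto. intros k' Hk'. f_equal. lia.
      * apply (update_enumerates b sY (fun k => 2 * k + 1)%nat); auto. intros k' Hk'. lia.
      * apply Hkeep; auto.
      * apply Hkeep; auto.
    + destruct (partial_isometry_extend_point dY dX HY HX EX b a m
                  (partial_isometry_sym dX dY a b m Hab) (sY k)) as [x Hx].
      exists (update a m x, update b m (sY k)). simpl. repeat split; auto.
      * apply partial_isometry_sym. exact Hx.
      * apply (update_enumerates a sX (fun k => 2 * k)%nat); auto. intros k' Hk'. lia.
      * apply (update_enumerates b sY (fun k => 2 * k + 1)%nat); auto. intros k' Hk'. f_equal. lia.
      * apply Hkeep; auto.
      * apply Hkeep; auto.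
  - assert (Hfst := stabilizing_coordinates (fun k => fst (u k)) (fun k i Hi => proj1 (proj2 (Hu k) i Hi))).
    assert (Hsnd := stabilizing_coordinates (fun k => snd (u k)) (fun k i Hi => proj2 (proj2 (Hu k) i Hi))).
    simpl in Hfst, Hsnd.
    exists (fun i => fst (u (S i)) i), (fun i => snd (u (S i)) i). repeat split.
    + intros i j. set (m := S (Nat.max i j)).
      rewrite <- (Hfst i m), <- (Hfst j m), <- (Hsnd i m), <- (Hsnd j m) by lia.
      apply (proj1 (proj1 (Hu m))); lia.
    + intros k. apply (proj1 (proj2 (proj1 (Hu (S (2 * k)))))). lia.
    + intros k. apply (proj2 (proj2 (proj1 (Hu (S (2 * k + 1)))))). lia.
Qed.

Definition tracks {X Y : Type} (dX : X -> X -> R) (dY : Y -> Y -> R)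
  (a : nat -> X) (b : nat -> Y) (x : X) (y : Y) : Prop :=
  forall eps, 0 < eps -> exists i, dX x (a i) < eps /\ dY y (b i) < eps.

Lemma tracks_sym {X Y : Type} dX dY (a : nat -> X) (b : nat -> Y) x y :
  tracks dX dY a b x y -> tracks dY dX b a y x.
Proof. intros H eps Heps. destruct (H eps Heps) as [i [H1 H2]]. eauto. Qed.

Section DenseIsometry.
Context {X Y : Type} (dX : X -> X -> R) (dY : Y -> Y -> R).
Context (HX : is_metric dX) (HY : is_metric dY).
Context (a : nat -> X) (b : nat -> Y) (Hab : forall i j, dY (b i) (b j) = dX (a i) (a j)).

Lemma tracks_exists : complete_metric dY ->
  forall x, (forall eps, 0 < eps -> exists i, dX x (a i) < eps) -> exists y, tracks dX dY a b x y.
Proof.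
  intros HcY x Hdense.
  set (c := fun m : nat => epsilon (inhabits 0%nat) (fun i => dX x (a i) < (/ 2) ^ m)).
  assert (Hc : forall m, dX x (a (c m)) < (/ 2) ^ m).
  { intro m. apply (epsilon_spec (inhabits 0%nat) (fun i => dX x (a i) < (/ 2) ^ m)).
    apply Hdense, pow_lt. lra. }
  destruct (HcY (fun m => b (c m))) as [y Hy].
  - intros eps Heps. destruct (pow_half_small (eps / 2) ltac:(lra)) as [N HN]. exists N.
    intros m m' Hm Hm'. rewrite Hab.
    pose proof (dist_triangle dX HX (a (c m)) x (a (c m'))). rewrite (dist_sym dX HX (a (c m)) x) in H.
    pose proof (Hc m). pose proof (Hc m'). pose proof (HN m Hm). pose proof (HN m' Hm'). lra.
  - exists y. intros eps Heps. destruct (Hy eps Heps) as [N1 HN1].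
    destruct (pow_half_small eps Heps) as [N2 HN2].
    exists (c (Nat.max N1 N2)). split.
    + pose proof (Hc (Nat.max N1 N2)). pose proof (HN2 (Nat.max N1 N2) ltac:(lia)). lra.
    + rewrite (dist_sym dY HY). apply HN1. lia.
Qed.

Lemma tracks_dist x y x' y' :
  tracks dX dY a b x y -> tracks dX dY a b x' y' -> dY y y' = dX x x'.
Proof.
  intros H H'. apply Rminus_diag_uniq, eq_of_abs_le_all. intros eta Heta.
  destruct (H (eta / 4) ltac:(lra)) as [i [Hi1 Hi2]]. destruct (H' (eta / 4) ltac:(lra)) as [j [Hj1 Hj2]].
  pose proof (dist_quadrilateral dX HX x x' (a i) (a j)) as EX.
  pose proof (dist_quadrilateral dY HY y y' (b i) (b j)) as EY.
  rewrite Hab in EY. apply Rabs_le_bounds in EX, EY. apply Rabs_le. lra.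
Qed.

End DenseIsometry.

Lemma isometric_of_dense_sequences {X Y : Type} (dX : X -> X -> R) (dY : Y -> Y -> R)
  (a : nat -> X) (b : nat -> Y) :
  is_metric dX -> is_metric dY -> (forall i j, dY (b i) (b j) = dX (a i) (a j)) ->
  complete_metric dX -> complete_metric dY ->
  (forall x eps, 0 < eps -> exists i, dX x (a i) < eps) ->
  (forall y eps, 0 < eps -> exists i, dY y (b i) < eps) ->
  isometric dX dY.
Proof.
  intros HX HY Hab HcX HcY Ha Hb.
  set (f := fun x => epsilon (inhabits (b 0%nat)) (tracks dX dY a b x)).
  assert (Hf : forall x, tracks dX dY a b x (f x))
    by (intro x; apply (epsilon_spec (inhabits (b 0%nat)) (tracks dX dY a b x)), (tracks_exists dX dY HX HY a b Hab); auto).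
  assert (Hiso : forall x x', dY (f x) (f x') = dX x x')
    by (intros; apply (tracks_dist dX dY HX HY a b Hab); apply Hf).
  exists f. split; [split|exact Hiso].
  - intros x x' E. apply (dist_eq dX HX). rewrite <- Hiso, E. apply (dist_refl dY HY).
  - intros y. destruct (tracks_exists dY dX HY HX b a (fun i j => eq_sym (Hab i j)) HcX y (Hb y))
      as [x Hx].
    exists x. apply (dist_eq dY HY).
    rewrite (tracks_dist dX dY HX HY a b Hab x (f x) x y (Hf x) (tracks_sym _ _ _ _ _ _ Hx)).
    apply (dist_refl dX HX).
Qed.

Theorem theorem3p8 (U : Type) (dU : U -> U -> R) (X : Type) (dX : X -> X -> R) :
  urysohn_space dU -> is_metric dX -> almost_isometric dX dU -> isometric dX dU.
Proof.
  intros [HU [HcU [HsU HF]]] HX HA.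
  destruct (HA 2 ltac:(lra)) as [phi Hphi].
  assert (Hphi_le := bilipschitz_bij_le dX dU 2 phi HX HU ltac:(lra) Hphi).
  assert (Hphi_surj := proj2 (proj1 Hphi)).
  assert (HcX := complete_of_bilipschitz dX dU 2 phi Hphi_le Hphi_surj ltac:(lra) HcU).
  destruct (separable_of_bilipschitz dX dU 2 phi Hphi_le Hphi_surj ltac:(lra) HsU)
    as [sX HsX].
  destruct HsU as [sU HsU].
  assert (EU := urysohn_one_point_extension dU (sU 0%nat) HU HF).
  assert (EX := complete_approx_extension dX HX HcX (almost_isometric_approx_extension dX dU HX HU EU HA)).
  destruct (back_and_forth dX dU sX sU HX HU EX EU) as [a [b [Hab [Ha Hb]]]].
  apply (isometric_of_dense_sequences dX dU a b HX HU Hab HcX HcU).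
  - intros x eps Heps. destruct (HsX x eps Heps) as [k Hk]. exists (2 * k)%nat. rewrite Ha. exact Hk.
  - intros y eps Heps. destruct (HsU y eps Heps) as [k Hk]. exists (2 * k + 1)%nat. rewrite Hb. exact Hk.
Qed.
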